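(* Let $n\ge 1$, $k\in\{1,\ldots,n\}$, $r\in\mathbb{R}$ and $x^0\in\mathbb{R}^n$. Let $\kappa\subseteq\{1,\ldots,n\}$ with $|\kappa|=k$ be a set of indices of $k$ largest entries of $x^0$ (ties broken arbitrarily), and let $[k]\in\kappa$ be an index such that $x^0_{[k]}$ is the $k$-th largest entry of $x^0$ (i.e. $x^0_{[k]}=\min_{i\in\kappa}x^0_i$). Then the unique minimizer of $\tfrac12\|x-x^0\|_2^2$ over $\mathcal{B}^r_{(k)}:=\{x\in\mathbb{R}^n:\ \sum_{i=1}^k x^{\downarrow}_i\le r\}$ coincides with the unique minimizer of $\tfrac12\|x-x^0\|_2^2$ over the polyhedron $$\Big\{x\in\mathbb{R}^n:\ \sum_{i\in\kappa}x_i\le r,\ \ x_i\ge x_{[k]}\ \forall i\in\kappa,\ \ x_j\le x_{[k]}\ \forall j\notin\kappa\Big\}.$$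
   Context: For $x\in\mathbb{R}^n$, $x^{\downarrow}$ denotes the nonincreasing rearrangement of $x$, so $\sum_{i=1}^k x^{\downarrow}_i$ is the sum of the $k$ largest entries of $x$. *)

From mathcomp Require Import all_boot all_order all_algebra.
From mathcomp Require Import reals.
Set Implicit Arguments. Unset Strict Implicit. Unset Printing Implicit Defensive.
Import Order.TTheory GRing.Theory Num.Theory.
Local Open Scope ring_scope.

(* Vectors of R^n are row vectors 'rV[R]_n, indexed by 'I_n = {0,...,n-1}. *)

Definition decr_rearr (R : realType) (n : nat) (x : 'rV[R]_n) : seq R :=
  sort (fun a b : R => b <= a) [seq x ord0 i | i <- enum 'I_n].

Definition topk_sum (R : realType) (n k : nat) (x : 'rV[R]_n) : R :=
  \sum_(i < k) (decr_rearr x)`_i.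

Definition half_sqdist (R : realType) (n : nat) (x x0 : 'rV[R]_n) : R :=
  2^-1 * \sum_(i < n) (x ord0 i - x0 ord0 i) ^+ 2.

Definition is_proj_min (R : realType) (n : nat) (S : 'rV[R]_n -> Prop)
    (x0 x : 'rV[R]_n) : Prop :=
  S x /\ forall y, S y -> half_sqdist x x0 <= half_sqdist y x0.

Definition topk_ball (R : realType) (n k : nat) (r : R) (x : 'rV[R]_n) : Prop :=
  topk_sum k x <= r.

(* the polyhedron determined by kappa and the index p = [k] *)
Definition kappa_polyhedron (R : realType) (n : nat) (r : R)
    (kappa : {set 'I_n}) (p : 'I_n) (x : 'rV[R]_n) : Prop :=
  [/\ \sum_(i in kappa) x ord0 i <= r,
      (forall i, i \in kappa -> x ord0 p <= x ord0 i) &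
      (forall j, j \notin kappa -> x ord0 j <= x ord0 p)].

(* Every y with topk_sum k y <= r can be moved into the polyhedron without
   increasing its distance to x0.  Permuting the entries of y does not change
   topk_sum k y, and exchanging two entries of y that are ordered oppositely to
   the corresponding entries of x0 does not increase the distance.  Among the
   permutations of y at least as close to x0 as y, one with the largest sum over
   kappa carries k largest entries of y on kappa; one more exchange puts the
   smallest of them at [k].  As the polyhedron lies inside B^r_(k), both problems
   are solved by the minimizer over the polyhedron, which exists by compactness;
   both sets are midpoint convex, so strict convexity of the objective gives
   uniqueness. *)

From mathcomp Require Import all_boot all_order all_algebra.
From mathcomp Require Import fingroup perm reals ring lra.
Set Implicit Arguments.
Unset Strict Implicit.
Unset Printing Implicit Defensive.
Import Order.TTheory GRing.Theory Num.Theory.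
Local Open Scope ring_scope.

Section TopSet.
Variables (T : finType) (R : realDomainType) (F : T -> R).

Definition top_set (S : {set T}) := forall i j, i \in S -> j \notin S -> F j <= F i.

Lemma ler_sum_eqcard (A B : {set T}) : #|A| = #|B| ->
    (forall a b, a \in A -> b \in B -> F a <= F b) ->
  \sum_(i in A) F i <= \sum_(i in B) F i.
Proof.
move=> cardAB leAB; have [B0 | [b0 b0B]] := set_0Vmem B.
  move: cardAB; rewrite B0 cards0 => /eqP; rewrite cards_eq0 => /eqP ->.
  by rewrite !big_set0.
have [b bB bmin] := arg_minP F b0B.
apply: (@le_trans _ _ (\sum_(i in A) F b)); first by apply: ler_sum => a aA; apply: leAB.
by rewrite sumr_const cardAB -sumr_const; apply: ler_sum => c cB; apply: bmin.
Qed.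

Lemma ler_sum_top_set (S0 S : {set T}) : top_set S0 -> #|S| = #|S0| ->
  \sum_(i in S) F i <= \sum_(i in S0) F i.
Proof.
move=> topS0 cardS.
rewrite (big_setID S0) [leRHS](big_setID S) /= setIC lerD2l.
apply: ler_sum_eqcard => [|a b]; first by rewrite !cardsD setIC cardS.
by rewrite !inE => /andP[aS0 _] /andP[_ bS0]; apply: topS0.
Qed.

End TopSet.

Section TopkBall.
Variables (R : realType) (n : nat).
Implicit Types (a u v x y z : 'rV[R]_n) (S K : {set 'I_n}) (s t : 'S_n).

Lemma exists_top_set_topk_sum y k : (k <= n)%N ->
  exists S, [/\ top_set (y ord0) S, #|S| = k & topk_sum k y = \sum_(i in S) y ord0 i].
Proof.
move=> kn; pose geT i j := y ord0 j <= y ord0 i.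
have geT_total : total geT by move=> i j; apply: le_total.
have geT_trans : transitive geT by move=> j i l /[swap]; apply: le_trans.
pose s := sort geT (enum 'I_n).
have size_s : size s = n by rewrite size_sort size_enum_ord.
have uniq_top : uniq (take k s) by rewrite take_uniq // sort_uniq enum_uniq.
exists [set i in take k s]; split.
- have : sorted geT (take k s ++ drop k s) by rewrite cat_take_drop sort_sorted.
  rewrite (sorted_pairwise geT_trans) pairwise_cat => /and3P[/allrelP top _ _].
  move=> i j; rewrite !inE => iS jS; apply: top => //.
  have : j \in take k s ++ drop k s by rewrite cat_take_drop mem_sort mem_enum.
  by rewrite mem_cat (negbTE jS).
- by rewrite cardsE (card_uniqP uniq_top) size_take size_s; case: ltngtP kn.
- rewrite /topk_sum /decr_rearr -(map_sort (leT' := geT)) //.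
  rewrite (eq_bigl (mem (take k s))) => [|i]; last by rewrite inE.
  rewrite -/s -(big_uniq _ uniq_top) /= -(big_map (y ord0) xpredT idfun) map_take.
  rewrite (big_nth 0) size_takel ?size_map ?size_s // big_mkord.
  by apply: eq_bigr => i _; rewrite nth_take.
Qed.

Lemma ler_sum_topk y S k : #|S| = k -> \sum_(i in S) y ord0 i <= topk_sum k y.
Proof.
move=> cardS; have kn : (k <= n)%N by rewrite -cardS (leq_trans (max_card _)) ?card_ord.
have [S0 [topS0 cardS0 ->]] := exists_top_set_topk_sum y kn.
by apply: ler_sum_top_set; rewrite // cardS cardS0.
Qed.

Lemma topk_sum_top_set y S k : top_set (y ord0) S -> #|S| = k ->
  topk_sum k y = \sum_(i in S) y ord0 i.
Proof.
move=> topS cardS; have kn : (k <= n)%N by rewrite -cardS (leq_trans (max_card _)) ?card_ord.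
have [S0 [topS0 cardS0 ->]] := exists_top_set_topk_sum y kn.
by apply/le_anti/andP; split; apply: ler_sum_top_set; rewrite // cardS cardS0.
Qed.

Lemma topk_sum_col_perm y s k : topk_sum k (col_perm s y) = topk_sum k y.
Proof.
rewrite /topk_sum /decr_rearr.
have ge_total : total (fun a b : R => b <= a) by move=> a b; apply: le_total.
have ge_trans : transitive (fun a b : R => b <= a) by move=> b a c /[swap]; apply: le_trans.
have ge_anti : antisymmetric (fun a b : R => b <= a) by move=> a b; rewrite andbC => /le_anti.
suff /(perm_sortP ge_total ge_trans ge_anti) -> :
  perm_eq [seq col_perm s y ord0 i | i <- enum 'I_n] [seq y ord0 i | i <- enum 'I_n] by [].
rewrite (@eq_map _ _ _ (y ord0 \o s)) => [|i]; last by rewrite mxE.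
rewrite map_comp; apply/perm_map/uniq_perm; rewrite ?(map_inj_uniq perm_inj) ?enum_uniq //.
by move=> i; rewrite mem_enum; apply/mapP; exists ((s^-1)%g i); rewrite ?mem_enum ?permKV.
Qed.

Lemma half_sqdist_xcol y a i j :
    (y ord0 i - y ord0 j) * (a ord0 i - a ord0 j) <= 0 ->
  half_sqdist (xcol i j y) a <= half_sqdist y a.
Proof.
have [<- _|ij yaij] := eqVneq i j; first by rewrite /xcol tperm1 col_perm1.
have ji : j != i by rewrite eq_sym.
apply: ler_wpM2l; first by rewrite invr_ge0 ler0n.
rewrite !(bigD1 i isT) /= !(bigD1 j ji) /=.
rewrite (eq_bigr (fun l => (y ord0 l - a ord0 l) ^+ 2)) => [|l /andP[li lj]].
  by rewrite !mxE tpermL tpermR !addrA lerD2r; nra.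
by rewrite mxE tpermD // eq_sym.
Qed.

Lemma sum_xcol_in y K i j : i \in K -> j \in K ->
  \sum_(l in K) xcol i j y ord0 l = \sum_(l in K) y ord0 l.
Proof.
move=> iK jK; rewrite [RHS](reindex_inj (@perm_inj _ (tperm i j))) /=.
by apply: eq_big => l; [case: tpermP => [->|->|]; rewrite ?iK ?jK | rewrite mxE].
Qed.

Lemma sum_xcol_out y K i j : i \in K -> j \notin K ->
  \sum_(l in K) xcol i j y ord0 l =
  \sum_(l in K) y ord0 l - y ord0 i + y ord0 j.
Proof.
move=> iK jK; rewrite !(bigD1 i iK) /= mxE tpermL.
rewrite (eq_bigr (fun l => y ord0 l)) => [|l /andP[lK li]]; first by ring.
have jl : j != l by apply: contraNneq jK => ->.
by rewrite mxE tpermD // eq_sym.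
Qed.

Lemma exists_closer_top_set a K k y : top_set (a ord0) K ->
  exists z, [/\ top_set (z ord0) K, topk_sum k z = topk_sum k y &
                half_sqdist z a <= half_sqdist y a].
Proof.
move=> topK; pose closer s := half_sqdist (col_perm s y) a <= half_sqdist y a.
have closer1 : closer 1%g by rewrite /closer col_perm1.
have [s closer_s s_max] := arg_maxP (fun s => \sum_(l in K) col_perm s y ord0 l) closer1.
exists (col_perm s y); split; rewrite ?topk_sum_col_perm // => i j iK jK.
rewrite leNgt; apply/negP => lt_ij.
have closer_swap : closer (tperm i j * s)%g.
  rewrite /closer col_permM; apply: le_trans closer_s; apply: half_sqdist_xcol.
  by have := topK i j iK jK; nra.
have := s_max _ closer_swap; rewrite col_permM sum_xcol_out //.
by rewrite /Order.ge /=; lra.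
Qed.

Lemma exists_closer_in_kappa_polyhedron a K p k r y :
    #|K| = k -> top_set (a ord0) K -> p \in K ->
    (forall i, i \in K -> a ord0 p <= a ord0 i) -> topk_ball k r y ->
  exists2 y', kappa_polyhedron r K p y' & half_sqdist y' a <= half_sqdist y a.
Proof.
move=> cardK topK pK pmin y_in.
have [z [topKz z_sum closer_z]] := exists_closer_top_set k y topK.
have [q qK qmin] := arg_minP (fun i => z ord0 i) pK.
exists (xcol p q z); last first.
  apply: le_trans closer_z; apply: half_sqdist_xcol.
  by have := qmin p pK; have := pmin q qK; nra.
split.
- by rewrite sum_xcol_in // -(topk_sum_top_set topKz cardK) z_sum.
- move=> i iK; rewrite !mxE tpermL; apply: qmin.
  by case: tpermP.
- move=> j jK; have [pj qj] : p != j /\ q != j by split; apply: contraNneq jK => <-.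
  by rewrite !mxE tpermL tpermD //; apply: topKz.
Qed.

Lemma kappa_polyhedron_top_set r K p x :
  kappa_polyhedron r K p x -> top_set (x ord0) K.
Proof. by case=> _ ge_p le_p i j iK jK; apply: le_trans (le_p j jK) (ge_p i iK). Qed.

Lemma kappa_polyhedron_sub_topk_ball r K p k x : #|K| = k ->
  kappa_polyhedron r K p x -> topk_ball k r x.
Proof.
move=> cardK Px; rewrite /topk_ball (topk_sum_top_set (kappa_polyhedron_top_set Px) cardK).
by case: Px.
Qed.

Definition midpoint (u v : 'rV[R]_n) : 'rV[R]_n := 2^-1 *: (u + v).

Definition midpoint_convex (S : 'rV[R]_n -> Prop) :=
  forall u v, S u -> S v -> S (midpoint u v).

Lemma sum_midpoint u v S : \sum_(i in S) midpoint u v ord0 i =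
  2^-1 * (\sum_(i in S) u ord0 i + \sum_(i in S) v ord0 i).
Proof. by rewrite -big_split mulr_sumr; apply: eq_bigr => i _; rewrite !mxE. Qed.

Lemma half_sqdist_midpoint u v a : half_sqdist (midpoint u v) a =
  (half_sqdist u a + half_sqdist v a) / 2 - (\sum_(i < n) (u ord0 i - v ord0 i) ^+ 2) / 8.
Proof.
rewrite /half_sqdist (eq_bigr (fun i => (u ord0 i - a ord0 i) ^+ 2 / 2 +
    (v ord0 i - a ord0 i) ^+ 2 / 2 - (u ord0 i - v ord0 i) ^+ 2 / 4)) => [|i _].
  by rewrite big_split sumrN big_split /= -!mulr_suml; field.
by rewrite !mxE; field.
Qed.

Lemma proj_min_unique (C : 'rV[R]_n -> Prop) a x y : midpoint_convex C ->
  is_proj_min C a x -> is_proj_min C a y -> y = x.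
Proof.
move=> convC [Cx x_min] [Cy y_min].
have sqr_ge0 i : 0 <= (x ord0 i - y ord0 i) ^+ 2 := sqr_ge0 _.
have sum0 : \sum_(i < n) (x ord0 i - y ord0 i) ^+ 2 = 0.
  have := x_min _ (convC _ _ Cx Cy); rewrite half_sqdist_midpoint.
  have : 0 <= \sum_(i < n) (x ord0 i - y ord0 i) ^+ 2 by apply: sumr_ge0.
  by have := x_min _ Cy; have := y_min _ Cx; lra.
apply/rowP => i; apply/eqP; rewrite eq_sym -subr_eq0 -sqrf_eq0.
by rewrite (psumr_eq0P (fun i _ => sqr_ge0 i) sum0).
Qed.

Lemma topk_ball_midpoint_convex k r : (k <= n)%N -> midpoint_convex (topk_ball k r).
Proof.
move=> kn u v; rewrite /topk_ball => u_in v_in.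
have [S [_ cardS ->]] := exists_top_set_topk_sum (midpoint u v) kn.
by rewrite sum_midpoint; have := ler_sum_topk u cardS; have := ler_sum_topk v cardS; lra.
Qed.

Lemma kappa_polyhedron_midpoint_convex r K p :
  midpoint_convex (kappa_polyhedron r K p).
Proof.
move=> u v [u_sum u_ge u_le] [v_sum v_ge v_le]; split.
- by rewrite sum_midpoint; lra.
- by move=> i iK; rewrite !mxE; have := u_ge i iK; have := v_ge i iK; lra.
- by move=> j jK; rewrite !mxE; have := u_le j jK; have := v_le j jK; lra.
Qed.

End TopkBall.

From mathcomp Require Import all_classical all_analysis.
Import numFieldNormedType.Exports.

Section Projection.
Variables (R : realType) (n : nat).
Implicit Types (a x y z : 'rV[R]_n) (K : {set 'I_n}).
Local Open Scope classical_set_scope.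

Lemma closed_le_continuous (f g : 'rV[R]_n -> R) :
  continuous f -> continuous g -> closed [set x | f x <= g x].
Proof.
move=> f_cont g_cont.
have -> : [set x | f x <= g x] = (f \- g) @^-1` [set t | t <= 0].
  by apply/seteqP; split => x /=; rewrite subr_le0.
apply: (@preimage_closed _ _ (f \- g) [set t | t <= 0]); last exact: closed_le.
by move=> x _; apply: (continuousB (f_cont x) (g_cont x)).
Qed.

Lemma continuous_half_sqdist a : continuous (fun x => half_sqdist x a).
Proof.
have sum_cont : continuous (fun x : 'rV[R]_n => \sum_(i < n) (x ord0 i - a ord0 i) ^+ 2).
  apply: (continuous_big (op := +%R) (x0 := 0)) => [|i _ x]; first exact: add_continuous.
  have coord_cont : {for x, continuous (fun x : 'rV[R]_n => x ord0 i - a ord0 i)}.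
    by apply: continuousB; [exact: coord_continuous | exact: cst_continuous].
  exact: continuous_comp coord_cont (@exprn_continuous R 2 _).
move=> x; rewrite /half_sqdist.
exact: (@continuousM _ _ (fun=> 2^-1) _ x (@cst_continuous _ _ _ x) (sum_cont x)).
Qed.

Lemma closed_kappa_polyhedron (r : R) K (p : 'I_n) : closed (kappa_polyhedron r K p).
Proof.
have coord_cont i : continuous (fun x : 'rV[R]_n => x ord0 i).
  by move=> x; apply: coord_continuous.
have -> : kappa_polyhedron r K p =
    [set x | \sum_(i in K) x ord0 i <= r] `&`
    \bigcap_(i in [set i | i \in K]) [set x | x ord0 p <= x ord0 i] `&`
    \bigcap_(j in [set j | j \notin K]) [set x | x ord0 j <= x ord0 p].
  by apply/seteqP; split => x /=; [case | case=> -[]]; split.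
apply: closedI; [apply: closedI|]; last 2 first.
- by apply: closed_bigI => i _; apply: closed_le_continuous.
- by apply: closed_bigI => j _; apply: closed_le_continuous.
apply: closed_le_continuous; last exact: cst_continuous.
apply: (continuous_big (op := +%R) (x0 := 0)) => [|i _]; first exact: add_continuous.
exact: coord_cont.
Qed.

Lemma exists_proj_min (C : set 'rV[R]_n) a z : closed C -> C z ->
  exists x, is_proj_min C a x.
Proof.
move=> C_closed Cz; pose c := half_sqdist z a; pose D := 2 * c + 1.
pose Cc := C `&` [set x | half_sqdist x a <= c].
have Cc_compact : compact Cc.
  apply: (subclosed_compact _ (rV_compact (fun i =>
    @segment_compact R (a ord0 i - D) (a ord0 i + D)))).
    apply: closedI => //.
    by apply: closed_le_continuous; [exact: continuous_half_sqdist | exact: cst_continuous].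
  move=> x [_ /= x_close] i /=; rewrite in_itv /=.
  have : (x ord0 i - a ord0 i) ^+ 2 <= 2 * half_sqdist x a.
    rewrite /half_sqdist mulrA divff ?pnatr_eq0 // mul1r (bigD1 i isT) /= lerDl.
    by apply: sumr_ge0 => j _; apply: sqr_ge0.
  have := sqr_ge0 (x ord0 i - a ord0 i + 1); have := sqr_ge0 (x ord0 i - a ord0 i - 1).
  by rewrite /D => *; apply/andP; split; nra.
have [x Cc_x x_min] := EVT_min_rV (ex_intro _ z (conj Cz (lexx c))) Cc_compact
  (continuous_subspaceT (@continuous_half_sqdist a)).
move: Cc_x; rewrite inE => -[Cx x_close]; exists x; split => // y Cy.
have [y_close|/ltW] := lerP (half_sqdist y a) c; first by apply: x_min; rewrite inE.
exact: le_trans.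
Qed.

End Projection.

Theorem lemma2p1 (R : realType) (n k : nat) (r : R) (x0 : 'rV[R]_n)
    (kappa : {set 'I_n}) (p : 'I_n) :
  (1 <= n)%N -> (1 <= k <= n)%N ->
  #|kappa| = k ->
  (forall i j, i \in kappa -> j \notin kappa -> x0 ord0 j <= x0 ord0 i) ->
  p \in kappa ->
  (forall i, i \in kappa -> x0 ord0 p <= x0 ord0 i) ->
  exists xs : 'rV[R]_n,
    [/\ is_proj_min (topk_ball k r) x0 xs,
        (forall y, is_proj_min (topk_ball k r) x0 y -> y = xs),
        is_proj_min (kappa_polyhedron r kappa p) x0 xs &
        (forall y, is_proj_min (kappa_polyhedron r kappa p) x0 y -> y = xs)].
Proof.
move=> _ /andP[k_gt0 kn] cardK topK pK pmin.
have P_const : kappa_polyhedron r kappa p (const_mx (r / k%:R)).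
  split=> [|i _|j _]; [|by rewrite !mxE|by rewrite !mxE].
  rewrite (eq_bigr (fun=> r / k%:R)) => [|i _]; last by rewrite mxE.
  by rewrite sumr_const cardK -(mulr_natr (r / k%:R)) divfK // pnatr_eq0 -lt0n.
have [xs [Pxs xs_min]] := exists_proj_min x0 (@closed_kappa_polyhedron _ _ r kappa p) P_const.
have minB : is_proj_min (topk_ball k r) x0 xs.
  split=> [|y /(exists_closer_in_kappa_polyhedron cardK topK pK pmin)[y' Py']].
    exact: kappa_polyhedron_sub_topk_ball Pxs.
  exact/le_trans/xs_min.
exists xs; split => // y y_min; apply: proj_min_unique y_min => //.
- exact: topk_ball_midpoint_convex.
- exact: kappa_polyhedron_midpoint_convex.
Qed.
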